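(* For every $n\ge 2$, $\sigma(P_n\times P_n)\ge n-1$ and $\sigma(T_n)\ge \lfloor (n-1)/2\rfloor$.
   Context: $P_n\times P_n$ is the grid with vertex set $\{1,\dots,n\}^2$, vertices adjacent iff they differ by $1$ in exactly one coordinate. $T_n$ is the graph whose vertices are the points of the planar triangular lattice lying in a closed equilateral triangle of side length $n-1$ with lattice-point corners (each side contains $n$ vertices), two vertices adjacent iff at Euclidean distance $1$. The stretch of a connected graph $G$ is $\sigma(G)=\min_T\max_{uv\in E(G)} d_T(u,v)$, the minimum over spanning trees $T$ of $G$. *)

From mathcomp Require Import all_boot.
Set Implicit Arguments. Unset Strict Implicit. Unset Printing Implicit Defensive.

Section Graphs.
Variable V : finType.

Definition srel (T : {set V * V}) : rel V := fun x y => (x, y) \in T.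

(* Distance in the graph with edge relation e: the least k such that there is
   a walk of length k from u to v (equals #|V| if v is unreachable). *)
Definition dist (e : rel V) (u v : V) : nat :=
  find (fun k => [exists p : k.-tuple V, path e u p && (last u p == v)])
       (iota 0 #|V|).

(* A cycle is a
   duplicate-free closed walk c of at least 3 vertices; such c has at most
   #|V| vertices, so quantifying over tuples of size k <= #|V| covers all
   cycles and makes the predicate boolean. *)
Definition spanning_tree (G : rel V) (T : {set V * V}) : bool :=
  [&& [forall x, forall y, srel T x y ==> G x y],
      [forall x, forall y, srel T x y ==> srel T y x],
      [forall x, forall y, connect (srel T) x y]
    & [forall k : 'I_#|V|.+1, forall c : k.-tuple V,
         (uniq c && (2 < size c)) ==> ~~ cycle (srel T) c]].

(* Stretch: min over spanning trees T of max over edges uv of G of d_T(u,v).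
   The default value #|V| of the min is never attained for connected G,
   since every spanning tree gives value <= #|V| - 1. *)
Definition stretch (G : rel V) : nat :=
  \big[minn/#|V|]_(T : {set V * V} | spanning_tree G T)
     \max_(e : V * V | G e.1 e.2) dist (srel T) e.1 e.2.

End Graphs.

(* The grid P_n x P_n on 'I_n * 'I_n (coordinates 0..n-1 instead of 1..n). *)
Definition grid_adj (n : nat) : rel ('I_n * 'I_n) := fun x y =>
  let: (a, b) := (nat_of_ord x.1, nat_of_ord x.2) in
  let: (c, d) := (nat_of_ord y.1, nat_of_ord y.2) in
  ((a == c) && ((b.+1 == d) || (d.+1 == b))) ||
  ((b == d) && ((a.+1 == c) || (c.+1 == a))).

(* Triangular grid T_n: lattice points i*e1 + j*e2 (e1 = (1,0),
   e2 = (1/2, sqrt 3 / 2)) with i, j >= 0, i + j <= n - 1.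
   Unit-distance neighbours differ by +-(1,0), +-(0,1), +-(1,-1). *)
Definition tri_vert (n : nat) := {p : 'I_n * 'I_n | p.1 + p.2 < n}.

Definition tri_adj (n : nat) : rel (tri_vert n) := fun x y =>
  let: (a, b) := (nat_of_ord (val x).1, nat_of_ord (val x).2) in
  let: (c, d) := (nat_of_ord (val y).1, nat_of_ord (val y).2) in
  ((b == d) && ((a.+1 == c) || (c.+1 == a))) ||
  ((a == c) && ((b.+1 == d) || (d.+1 == b))) ||
  ((a.+1 == c) && (d.+1 == b)) || ((c.+1 == a) && (b.+1 == d)).
Arguments grid_adj n : clear implicits.
Arguments tri_adj n : clear implicits.

(* The argument is a separation principle for trees (separated_edge): if
   every vertex c of a graph G is assigned a G-connected set A c not
   containing c, and any two of these sets meet, then in every spanning tree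
   T some vertex c separates (in T - c) the two ends x, y of a G-edge lying
   in A c.  The T-path from x to y then runs through c, so its length is at
   least h x + h y for any function h that vanishes at c and changes by at
   most one along edges.  Choosing for h the graph distance from c and for
   A c a part of the boundary that is far from c gives stretch_lower_bound. *)

From mathcomp Require Import all_boot.
From mathcomp Require Import zify.

Set Implicit Arguments. Unset Strict Implicit. Unset Printing Implicit Defensive.

Lemma path_restrict (V : eqType) (e : rel V) (P : pred V) x p :
  path e x p -> all P (x :: p) -> path (fun u v => [&& e u v, P u & P v]) x p.
Proof.
elim: p x => [|y p IH] x //= /andP [exy pp] /and3P [Px Py Pp].
by rewrite exy Px Py /=; apply: IH => //=; rewrite Py.
Qed.

Definition induced (V : finType) (R : rel V) (S : {set V}) : rel V :=
  fun u v => [&& R u v, u \in S & v \in S].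

Lemma induced_sym (V : finType) (R : rel V) (S : {set V}) :
  symmetric R -> symmetric (induced R S).
Proof. by move=> R_sym u v; rewrite /induced R_sym; congr (_ && _); apply: andbC. Qed.

Section TreeBranches.
Variables (V : finType) (t : rel V).
Hypothesis t_sym : symmetric t.
Hypothesis t_irr : forall x, ~~ t x x.
Hypothesis t_acyc : forall s : seq V, uniq s -> 2 < size s -> ~~ cycle t s.

Definition avoid (c : V) : rel V := fun x y => [&& t x y, x != c & y != c].

Definition cut (c w : V) : rel V :=
  fun x y => [&& t x y, ~~ ((x == c) && (y == w)) & ~~ ((x == w) && (y == c))].

Definition branch (c w : V) : {set V} := [set x | connect (avoid c) w x].

Lemma cut_sym c w : symmetric (cut c w).
Proof.
move=> x y; rewrite /cut t_sym; congr (_ && _).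
by rewrite andbC [(y == c) && _]andbC [(y == w) && _]andbC.
Qed.

Lemma neighbour_neq c w : t c w -> w != c.
Proof. by move=> tcw; apply: contraTneq tcw => ->; rewrite (negbTE (t_irr c)). Qed.

Lemma avoid_sub_cut c w x y : connect (avoid c) x y -> connect (cut c w) x y.
Proof.
apply: connect_sub => u v /and3P [tuv uc vc]; apply: connect1.
by rewrite /cut tuv (negbTE uc) (negbTE vc) /= andbF.
Qed.

Lemma edge_is_bridge c w : t c w -> ~~ connect (cut c w) c w.
Proof.
move=> tcw; apply/negP => /connectP [p pp lp].
case/shortenP: pp lp => p' pp' up' _ lp'.
case: p' pp' up' lp' => [|z [|z' q]] pp' up' lp'.
- by rewrite /= in lp'; subst w; rewrite (negbTE (t_irr c)) in tcw.
- by rewrite /= in lp'; subst z; move: pp'; rewrite /= /cut !eqxx /= andbF.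
- have := t_acyc up' isT.
  rewrite (_ : cycle t _ = path t c (rcons [:: z, z' & q] c)) // rcons_path.
  move/negP; apply; apply/andP; split; last by rewrite -lp' t_sym.
  by apply: sub_path pp' => x y /and3P [].
Qed.

Lemma neighbours_separated w z v :
  t w z -> t w v -> z != v -> ~~ connect (avoid w) z v.
Proof.
move=> twz twv nzv; apply/negP => zv.
apply: (negP (edge_is_bridge twv)).
apply: connect_trans (connect1 (_ : cut w v w z)) (avoid_sub_cut v zv).
by rewrite /cut twz eqxx /= nzv /= eq_sym (negbTE (neighbour_neq twv)).
Qed.

Lemma center_notin_branch c w : t c w -> c \notin branch c w.
Proof.
move=> tcw; have wc := neighbour_neq tcw; rewrite inE.
apply/negP => /connectP [p pp lp].
have : all (fun y => y != c) (w :: p).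
  clear tcw lp; elim: p w pp wc => [|y p IH] w /=; first by move=> _ ->.
  by move=> /andP [/and3P [_ _ yc] pp] ->; apply: IH.
by move/allP/(_ _ (mem_last w p)); rewrite -lp eqxx.
Qed.

Lemma opposite_branches_disjoint c w x :
  t c w -> x \in branch c w -> x \in branch w c -> False.
Proof.
rewrite !inE => tcw /(avoid_sub_cut w) wx /(avoid_sub_cut c) cx.
have cut_swap : cut w c =2 cut c w.
  by move=> u v; rewrite /cut; congr (_ && _); apply: andbC.
apply: (negP (edge_is_bridge tcw)); apply: connect_trans (_ : connect _ c x) _.
  by rewrite -(eq_connect cut_swap).
by rewrite (sym_connect_sym (cut_sym c w)).
Qed.

Lemma branch_shrinks c w z :
  t c w -> t w z -> z != c -> #|branch w z| < #|branch c w|.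
Proof.
move=> tcw twz zc.
have zc_sep : ~~ connect (avoid w) z c.
  by apply: neighbours_separated => //; rewrite t_sym.
apply: proper_card; apply/properP; split.
  apply/subsetP => x; rewrite !inE => /connectP [p pp lp].
  have p_avoids_c : all (fun y => y != c) (z :: p).
    apply/allP => y yin; apply: contraNneq zc_sep => yc.
    by rewrite -yc (path_connect pp yin).
  apply: connect_trans (connect1 (_ : avoid c w z)) _.
    by rewrite /avoid twz neighbour_neq.
  apply/connectP; exists p => //.
  apply: sub_path (path_restrict pp p_avoids_c) => u v /and3P [/and3P [tuv _ _] uc vc].
  by rewrite /avoid tuv uc vc.
exists w; first by rewrite inE connect0.
exact: center_notin_branch.
Qed.

Hypothesis t_conn : forall x y, connect t x y.

Lemma in_some_branch c x : x != c -> exists2 w, t c w & x \in branch c w.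
Proof.
move=> xc; have /connectP [p pp lp] := t_conn c x.
case/shortenP: pp lp => p' pp' up' _ lp'.
case: p' pp' up' lp' => [|w q] pp' up' lp'.
  by rewrite /= in lp'; rewrite lp' eqxx in xc.
move: pp' => /= /andP [tcw pq]; exists w => //.
rewrite inE; apply/connectP; exists q => //.
apply: path_restrict pq _; apply/allP => y yin.
by apply: contraTneq up' => yc; rewrite /= -yc yin.
Qed.

Variables (G : rel V) (A : V -> {set V}).
Hypothesis A_avoid : forall c, c \notin A c.
Hypothesis A_meet : forall c c', exists x, (x \in A c) && (x \in A c').
Hypothesis A_conn : forall c x y, x \in A c -> y \in A c ->
  connect (induced G (A c)) x y.

Lemma far_set_in_branch c :
  (forall x y, G x y -> x \in A c -> y \in A c -> connect (avoid c) x y) ->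
  exists2 w, t c w & A c \subset branch c w.
Proof.
move=> unseparated; have [x0 /andP [x0A _]] := A_meet c c.
have x0c : x0 != c by apply: contraTneq x0A => ->; exact: A_avoid.
have [w tcw x0w] := in_some_branch x0c; exists w => //.
apply/subsetP => y yA; rewrite inE in x0w; rewrite inE.
apply: connect_trans x0w _.
apply: connect_sub (A_conn x0A yA) => u v /and3P [Guv uA vA].
exact: unseparated.
Qed.

(* Otherwise every c sends A c into a branch at a neighbour w(c); a
   pair (c, w(c)) with smallest branch leads, via w(w(c)), either to a
   smaller branch or (when w(w(c)) = c) to two disjoint branches containing
   the intersecting sets A c and A w(c). *)
Lemma separated_edge (v0 : V) :
  exists c x y, [&& G x y, x \in A c, y \in A c & ~~ connect (avoid c) x y].
Proof.
have [|] := boolP [exists c, exists x, exists y,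
  [&& G x y, x \in A c, y \in A c & ~~ connect (avoid c) x y]].
  by case/existsP => c /existsP [x /existsP [y sep]]; exists c, x, y.
rewrite negb_exists => /forallP unsep; exfalso.
have to_branch c : exists2 w, t c w & A c \subset branch c w.
  apply: far_set_in_branch => x y Gxy xA yA.
  move: (unsep c); rewrite negb_exists => /forallP /(_ x).
  by rewrite negb_exists => /forallP /(_ y); rewrite Gxy xA yA /= negbK.
have [w0 tw0 sub0] := to_branch v0.
pose P := [pred cw : V * V | t cw.1 cw.2 && (A cw.1 \subset branch cw.1 cw.2)].
have P0 : P (v0, w0) by rewrite /= tw0 sub0.
case: (arg_minnP (fun cw : V * V => #|branch cw.1 cw.2|) P0).
move=> [c w] /= /andP [tcw sub_c] minimal.
have [z twz sub_w] := to_branch w.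
have [zc | zc] := eqVneq z c.
  rewrite {}zc in sub_w; have [x /andP [xc xw]] := A_meet c w.
  exact: (opposite_branches_disjoint tcw (subsetP sub_c x xc) (subsetP sub_w x xw)).
have := minimal (w, z); rewrite /= twz sub_w => /(_ isT).
by rewrite leqNgt branch_shrinks.
Qed.

End TreeBranches.

Definition lipschitz (V : Type) (e : rel V) (h : V -> nat) : Prop :=
  forall u v, e u v -> h u <= (h v).+1 /\ h v <= (h u).+1.

Lemma lipschitz_path (V : eqType) (e : rel V) h x p :
  lipschitz e h -> path e x p ->
  h x <= size p + h (last x p) /\ h (last x p) <= size p + h x.
Proof.
move=> lip; elim: p x => [|y p IH] x /=; first by move=> _; lia.
move=> /andP [exy pp]; have [] := IH y pp; have [] := lip x y exy; lia.
Qed.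

Lemma walk_through_zero (V : finType) (t : rel V) h c x y p :
  lipschitz t h -> h c = 0 -> x != c -> ~~ connect (avoid t c) x y ->
  path t x p -> last x p = y -> h x + h y <= size p.
Proof.
move=> lip hc0 xc sep pp lp.
have : c \in x :: p.
  apply: contraNT sep => cNp; apply/connectP; exists p => //.
  apply: path_restrict pp _; apply/allP => z zp.
  by apply: contraNneq cNp => <-.
rewrite in_cons eq_sym (negbTE xc) /= => cp.
case/path.splitP: cp pp lp => p1 p2; rewrite cat_path last_cat last_rcons.
move=> /andP [pp1 pp2] lp; rewrite size_cat size_rcons.
have [to_c _] := lipschitz_path lip pp1.
have [_ from_c] := lipschitz_path lip pp2.
move: to_c from_c; rewrite last_rcons lp hc0 size_rcons !addn0 => to_c from_c.
exact: leq_add to_c from_c.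
Qed.

Lemma dist_lower_bound (V : finType) (e : rel V) u v b :
  b <= #|V| -> (forall p, path e u p -> last u p = v -> b <= size p) ->
  b <= dist e u v.
Proof.
move=> bV walks; rewrite /dist; set d := find _ _.
have [lt|] := ltnP d #|V|; last exact: leq_trans.
move: lt; rewrite /d -{2}(size_iota 0 #|V|) -has_find => found.
have /existsP [p /andP [pp /eqP lp]] := nth_find 0 found.
move: found; rewrite has_find size_iota => lt.
by have := walks p pp lp; rewrite size_tuple nth_iota.
Qed.

Lemma spanning_treeP (V : finType) (G : rel V) (T : {set V * V}) :
  spanning_tree G T ->
  [/\ subrel (srel T) G, symmetric (srel T),
      (forall x y, connect (srel T) x y) &
      (forall s : seq V, uniq s -> 2 < size s -> ~~ cycle (srel T) s)].
Proof.
case/and4P => /forallP sub /forallP sym /forallP conn /forallP acyc; split.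
- by move=> x y; move: (sub x) => /forallP /(_ y) /implyP.
- by move=> x y; apply/idP/idP; [move: (sym x) | move: (sym y)] => /forallP /(_ _) /implyP; apply.
- by move=> x y; move: (conn x) => /forallP /(_ y).
- move=> s us s3.
  have s_small : size s < #|V|.+1 by rewrite ltnS -(card_uniqP us) max_card.
  move: (acyc (Ordinal s_small)) => /forallP /(_ (in_tuple s)) /implyP.
  by rewrite /= us s3 => /(_ isT).
Qed.

(* Suppose every vertex c comes with a
   G-connected set A c, any two of which meet, and with a G-Lipschitz
   function h c vanishing at c and at least b/2 (and positive) on A c; v0
   only witnesses that V is inhabited.  By
   separated_edge, any spanning tree T has a vertex c separating in T the ends
   x, y of a G-edge inside A c, so d_T(x, y) >= h c x + h c y >= b. *)
Lemma stretch_lower_bound (V : finType) (G : rel V) (b : nat)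
  (h : V -> V -> nat) (A : V -> {set V}) (v0 : V) :
  (forall x, ~~ G x x) ->
  (forall c, lipschitz G (h c)) ->
  (forall c, h c c = 0) ->
  (forall c x, x \in A c -> 0 < h c x /\ b <= 2 * h c x) ->
  (forall c c', exists x, (x \in A c) && (x \in A c')) ->
  (forall c x y, x \in A c -> y \in A c ->
     connect (induced G (A c)) x y) ->
  b <= #|V| ->
  b <= stretch G.
Proof.
move=> G_irr h_lip h_c A_far A_meet A_conn bV.
rewrite /stretch; apply: (big_ind (leq b)) => // [m1 m2|T spT].
  by rewrite leq_min => -> ->.
have [TG T_sym T_conn T_acyc] := spanning_treeP spT.
have T_irr x : ~~ srel T x x by apply: contra (TG x x) (G_irr x).
have A_avoid c : c \notin A c.
  by apply/negP => /(A_far c c) []; rewrite h_c.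
have [c [x [y /and4P [Gxy xA yA sep]]]] :=
  separated_edge T_sym T_irr T_acyc T_conn A_avoid A_meet A_conn v0.
apply: leq_trans (leq_bigmax_cond (x, y) Gxy); apply: dist_lower_bound => // p pp lp.
have xc : x != c by apply: contraTneq xA => ->; exact: A_avoid.
have T_lip : lipschitz (srel T) (h c) by move=> u v /TG /h_lip.
have := walk_through_zero T_lip (h_c c) xc sep pp lp.
have [_ hx] := A_far c x xA; have [_ hy] := A_far c y yA; lia.
Qed.

Lemma walk_connect (V : finType) (R : rel V) (f : nat -> V) (L : nat) :
  symmetric R -> (forall i, i < L -> R (f i) (f i.+1)) ->
  forall i j, i <= L -> j <= L -> connect R (f i) (f j).
Proof.
move=> R_sym step.
have from0 i : i <= L -> connect R (f 0) (f i).
  elim: i => [|i IH] iL; first exact: connect0.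
  exact: connect_trans (IH (ltnW iL)) (connect1 (step i iL)).
move=> i j iL jL; apply: connect_trans (from0 j jL).
by rewrite (sym_connect_sym R_sym) from0.
Qed.


Definition absd (a b : nat) : nat := (a - b) + (b - a).

Section Grid.
Variable m : nat.
Local Notation n := m.+2.
Local Notation gvert := ('I_n * 'I_n)%type.

Lemma grid_sym : symmetric (grid_adj n).
Proof. by move=> u v; rewrite /grid_adj /=; apply/idP/idP; lia. Qed.

Definition far_end (a : 'I_n) : 'I_n := if 2 * a < n then ord_max else ord0.

Lemma far_end_far (a : 'I_n) : m.+1 <= 2 * absd (far_end a) a.
Proof. by rewrite /far_end /absd; case: ifP => /=; lia. Qed.

Definition l1_dist (c v : gvert) : nat := absd v.1 c.1 + absd v.2 c.2.

Definition far_cross (c : gvert) : {set gvert} :=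
  [set v | (v.1 == far_end c.1) || (v.2 == far_end c.2)].

Lemma far_cross_far c v : v \in far_cross c -> 0 < l1_dist c v /\ m.+1 <= 2 * l1_dist c v.
Proof.
have := far_end_far c.1; have := far_end_far c.2.
rewrite inE /l1_dist => far2 far1 /orP [/eqP -> | /eqP ->];
  move: far1 far2 (absd v.1 c.1) (absd v.2 c.2); lia.
Qed.

(* The far column and far row are lines of grid edges meeting at the corner
   (far_end c.1, far_end c.2), so far_cross c is connected. *)
Lemma far_cross_connected c x y : x \in far_cross c -> y \in far_cross c ->
  connect (induced (grid_adj n) (far_cross c)) x y.
Proof.
set R := induced _ _; have R_sym : symmetric R by apply/induced_sym/grid_sym.
pose corner := (far_end c.1, far_end c.2).
have column (j : 'I_n) : connect R corner (far_end c.1, j).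
  have step i : i < m.+1 -> R (far_end c.1, inord i) (far_end c.1, inord i.+1).
    by move=> lti; rewrite /R /induced /grid_adj !inE /= !eqxx /= !inordK //; lia.
  have := walk_connect R_sym step (ltn_ord (far_end c.2)) (ltn_ord j).
  by rewrite !inord_val.
have row (j : 'I_n) : connect R corner (j, far_end c.2).
  have step i : i < m.+1 -> R (inord i, far_end c.2) (inord i.+1, far_end c.2).
    by move=> lti; rewrite /R /induced /grid_adj !inE /= !eqxx /= !inordK ?orbT //; lia.
  have := walk_connect R_sym step (ltn_ord (far_end c.1)) (ltn_ord j).
  by rewrite !inord_val.
have from_corner z : z \in far_cross c -> connect R corner z.
  by case: z => z1 z2; rewrite inE /= => /orP [/eqP -> | /eqP ->].
move=> /from_corner cx /from_corner cy; apply: connect_trans cy.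
by rewrite (sym_connect_sym R_sym).
Qed.

Lemma grid_stretch : m.+1 <= stretch (grid_adj n).
Proof.
apply: (@stretch_lower_bound _ _ _ l1_dist far_cross (ord0, ord0)).
- by move=> x; rewrite /grid_adj /=; lia.
- by move=> c u v; rewrite /grid_adj /l1_dist /absd /=; lia.
- by move=> c; rewrite /l1_dist /absd !subnn.
- exact: far_cross_far.
- by move=> c c'; exists (far_end c.1, far_end c'.2); rewrite !inE !eqxx /= orbT.
- exact: far_cross_connected.
- by rewrite card_prod card_ord; nia.
Qed.

End Grid.

Section Triangle.
Variable m : nat.
Local Notation n := m.+2.
Local Notation tvert := (tri_vert n).

Definition tri_a (v : tvert) : nat := (val v).1.
Definition tri_b (v : tvert) : nat := (val v).2.

Lemma tri_bound (v : tvert) : tri_a v + tri_b v < n.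
Proof. exact: valP v. Qed.

Definition tri_pt (i j : nat) : tvert :=
  insubd (exist _ (ord0, ord0) isT : tvert) (inord i, inord j).

Lemma tri_ptE i j : i + j < n -> tri_a (tri_pt i j) = i /\ tri_b (tri_pt i j) = j.
Proof.
move=> ijn; rewrite /tri_a /tri_b /tri_pt insubdK /= ?inordK //; try lia.
by rewrite unfold_in /= !inordK //; lia.
Qed.

Lemma tri_pt_coords (v : tvert) : v = tri_pt (tri_a v) (tri_b v).
Proof. by rewrite /tri_pt /tri_a /tri_b !inord_val -surjective_pairing valKd. Qed.

Lemma tri_adjE (u v : tvert) : tri_adj n u v =
  ((tri_b u == tri_b v) && (((tri_a u).+1 == tri_a v) || ((tri_a v).+1 == tri_a u))) ||
  ((tri_a u == tri_a v) && (((tri_b u).+1 == tri_b v) || ((tri_b v).+1 == tri_b u))) ||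
  (((tri_a u).+1 == tri_a v) && ((tri_b v).+1 == tri_b u)) ||
  (((tri_a v).+1 == tri_a u) && ((tri_b u).+1 == tri_b v)).
Proof. by []. Qed.

Lemma tri_irr (v : tvert) : ~~ tri_adj n v v.
Proof. by rewrite tri_adjE; move: (tri_a v) (tri_b v) => a b; lia. Qed.

Lemma tri_sym : symmetric (tri_adj n).
Proof.
move=> u v; rewrite !tri_adjE.
by move: (tri_a u) (tri_b u) (tri_a v) (tri_b v) => a b a' b'; apply/idP/idP; lia.
Qed.

(* The graph distance of the triangular lattice from c (hexagonal norm). *)
Definition hex_dist (c v : tvert) : nat :=
  maxn (maxn (absd (tri_a v) (tri_a c)) (absd (tri_b v) (tri_b c)))
       (absd (tri_a v + tri_b v) (tri_a c + tri_b c)).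

Lemma tri_adj_steps (u v : tvert) : tri_adj n u v ->
  [/\ tri_a u <= (tri_a v).+1 /\ tri_a v <= (tri_a u).+1,
      tri_b u <= (tri_b v).+1 /\ tri_b v <= (tri_b u).+1
    & tri_a u + tri_b u <= (tri_a v + tri_b v).+1 /\
      tri_a v + tri_b v <= (tri_a u + tri_b u).+1].
Proof.
rewrite tri_adjE; move: (tri_a u) (tri_b u) (tri_a v) (tri_b v) => a b a' b' adj.
by split; split; lia.
Qed.

Lemma absd_step x y p : x <= y.+1 -> y <= x.+1 -> absd x p <= (absd y p).+1.
Proof. by rewrite /absd; lia. Qed.

Lemma maxn3_step x y z x' y' z' : x <= x'.+1 -> y <= y'.+1 -> z <= z'.+1 ->
  maxn (maxn x y) z <= (maxn (maxn x' y') z').+1.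
Proof. by lia. Qed.

Lemma hex_dist_lipschitz c : lipschitz (tri_adj n) (hex_dist c).
Proof.
move=> u v /tri_adj_steps [[au av] [bu bv] [su sv]].
by split; apply: maxn3_step; apply: absd_step.
Qed.

Definition on_side (k : nat) (v : tvert) : bool :=
  if k == 0 then tri_a v == 0 else if k == 1 then tri_b v == 0
  else tri_a v + tri_b v == m.+1.

(* The side farthest from c: the distances of c to the three sides are
   tri_a c, tri_b c and m + 1 - tri_a c - tri_b c. *)
Definition far_side (c : tvert) : nat :=
  if (tri_b c <= tri_a c) && (m.+1 - tri_a c - tri_b c <= tri_a c) then 0
  else if m.+1 - tri_a c - tri_b c <= tri_b c then 1 else 2.

Definition far_side_set (c : tvert) : {set tvert} := [set v | on_side (far_side c) v].

(* The three distances to the sides add up to m + 1, so the largest is at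
   least (m + 1) / 3, which is more than (m + 1) / 4. *)
Lemma far_side_far c v : v \in far_side_set c ->
  0 < hex_dist c v /\ (m.+1)./2 <= 2 * hex_dist c v.
Proof.
have da : absd (tri_a v) (tri_a c) <= hex_dist c v by rewrite /hex_dist !leq_max leqnn.
have db : absd (tri_b v) (tri_b c) <= hex_dist c v by rewrite /hex_dist !leq_max leqnn orbT.
have ds : absd (tri_a v + tri_b v) (tri_a c + tri_b c) <= hex_dist c v.
  by rewrite /hex_dist !leq_max leqnn orbT.
have cn := tri_bound c; rewrite inE /far_side -divn2.
case: ifP => [/andP [bc rc] | /negbT]; last rewrite negb_and -!ltnNge => far0.
  by rewrite /on_side /= => /eqP a0; move: da; rewrite a0 /absd; lia.
case: ifP => [rc | /negbT]; last rewrite -ltnNge => far1.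
  by rewrite /on_side /= => /eqP b0; move: db; rewrite b0 /absd; lia.
by rewrite /on_side /= => /eqP s1; move: ds; rewrite s1 /absd; lia.
Qed.

Lemma far_side_le2 c : far_side c <= 2.
Proof. by rewrite /far_side; case: ifP => //; case: ifP. Qed.

(* Each corner lies on two sides; any two sides share a corner. *)
Lemma far_side_sets_meet c c' : exists x, (x \in far_side_set c) && (x \in far_side_set c').
Proof.
have [a0 b0] : tri_a (tri_pt 0 0) = 0 /\ tri_b (tri_pt 0 0) = 0 by apply: tri_ptE.
have [a1 b1] : tri_a (tri_pt m.+1 0) = m.+1 /\ tri_b (tri_pt m.+1 0) = 0.
  by apply: tri_ptE; rewrite addn0.
have [a2 b2] : tri_a (tri_pt 0 m.+1) = 0 /\ tri_b (tri_pt 0 m.+1) = m.+1 by apply: tri_ptE.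
rewrite /far_side_set; have := far_side_le2 c; have := far_side_le2 c'.
case: (far_side c) => [|[|[|//]]]; case: (far_side c') => [|[|[|//]]] _ _;
  [ exists (tri_pt 0 0) | exists (tri_pt 0 0) | exists (tri_pt 0 m.+1)
  | exists (tri_pt 0 0) | exists (tri_pt 0 0) | exists (tri_pt m.+1 0)
  | exists (tri_pt 0 m.+1) | exists (tri_pt m.+1 0) | exists (tri_pt m.+1 0) ];
  by rewrite !inE /on_side /= ?a0 ?b0 ?a1 ?b1 ?a2 ?b2 ?addn0 !eqxx.
Qed.

Definition side_walk (k i : nat) : tvert :=
  if k == 0 then tri_pt 0 i else if k == 1 then tri_pt i 0 else tri_pt i (m.+1 - i).

Lemma side_walk_step k i : i < m.+1 ->
  induced (tri_adj n) [set v | on_side k v] (side_walk k i) (side_walk k i.+1).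
Proof.
move=> im; rewrite /induced tri_adjE !inE /on_side /side_walk.
case: k => [|[|k]] /=.
- by have [-> ->] := @tri_ptE 0 i (ltnW im); have [-> ->] := @tri_ptE 0 i.+1 im; rewrite !eqxx ?orbT.
- have [-> ->] : tri_a (tri_pt i 0) = i /\ tri_b (tri_pt i 0) = 0 by apply: tri_ptE; lia.
  have [-> ->] : tri_a (tri_pt i.+1 0) = i.+1 /\ tri_b (tri_pt i.+1 0) = 0 by apply: tri_ptE; lia.
  by rewrite !eqxx.
- have [-> ->] : tri_a (tri_pt i (m.+1 - i)) = i /\ tri_b (tri_pt i (m.+1 - i)) = m.+1 - i.
    by apply: tri_ptE; lia.
  have [-> ->] : tri_a (tri_pt i.+1 (m.+1 - i.+1)) = i.+1 /\
                 tri_b (tri_pt i.+1 (m.+1 - i.+1)) = m.+1 - i.+1 by apply: tri_ptE; lia.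
  by move: im; clear; lia.
Qed.

Lemma on_side_walk k v : on_side k v -> exists2 i, i <= m.+1 & v = side_walk k i.
Proof.
have vn := tri_bound v; rewrite /on_side /side_walk.
case: k => [|[|k]] /= /eqP side; rewrite {1}(tri_pt_coords v).
- by exists (tri_b v); [lia | rewrite side].
- by exists (tri_a v); [lia | rewrite side].
- by exists (tri_a v); [lia | congr tri_pt; lia].
Qed.

Lemma side_connected k x y : x \in [set v | on_side k v] -> y \in [set v | on_side k v] ->
  connect (induced (tri_adj n) [set v | on_side k v]) x y.
Proof.
rewrite !inE => /on_side_walk [i im ->] /on_side_walk [j jm ->].
exact: walk_connect (induced_sym _ tri_sym) (side_walk_step k) _ _ im jm.
Qed.

Lemma tri_stretch : (m.+1)./2 <= stretch (tri_adj n).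
Proof.
apply: (@stretch_lower_bound _ _ _ hex_dist far_side_set (tri_pt 0 0)).
- exact: tri_irr.
- exact: hex_dist_lipschitz.
- by move=> c; rewrite /hex_dist /absd !subnn.
- exact: far_side_far.
- exact: far_side_sets_meet.
- move=> c; exact: side_connected.
- have inj : injective (fun i : 'I_n => tri_pt 0 i).
    move=> i j /(congr1 tri_b).
    by rewrite (@tri_ptE 0 i (ltn_ord i)).2 (@tri_ptE 0 j (ltn_ord j)).2; apply: ord_inj.
  by have := leq_card _ inj; rewrite card_ord; lia.
Qed.
End Triangle.

Theorem mainTheorem8 (n : nat) :
  2 <= n ->
  n - 1 <= stretch (grid_adj n) /\ (n - 1)./2 <= stretch (tri_adj n).
Proof.
case: n => [|[|m]] // _; rewrite subn1 /=.
split; [exact: grid_stretch | exact: tri_stretch].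
Qed.
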